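(* Consider the following setting. $\mathcal{S}$ is a state space, $\mathcal{A}$ a finite action space, $\rho$ a distribution on $\mathcal{S}$, $\pi_{\mathrm{ref}}$ a policy with $\pi_{\mathrm{ref}}(a|s)>0$ for all $(s,a)$, $\beta>0$, $R>0$, and $r^*:\mathcal{S}\times\mathcal{A}\to[0,R]$ is the ground-truth reward. Let $\Pi$ be a finite policy class such that (I) $\pi^*_{r^*}\in\Pi$ and (II) for every $\pi\in\Pi$ and all $(s,a)$, $|\log(\pi(a|s)/\pi_{\mathrm{ref}}(a|s))|\le R/\beta$. Let $r^1,\dots,r^W:\mathcal{S}\times\mathcal{A}\to[0,R]$ be reward functions. Then for every policy $\pi\in\mathrm{conv}(\Pi)\cup\{\pi^*_{r^w}\}_{w=1}^W$, $$\mathrm{Cov}^{\pi^*_{r^*}|\pi}\le 1+\kappa\big(e^{2R/\beta}\big)\cdot\frac{J_\beta(\pi^*_{r^*})-J_\beta(\pi)}{\beta},$$ where $\kappa(x):=\frac{(x-1)^2}{x-1-\log x}$ (and $\kappa(x)=O(x)$).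
   Context: For a reward $r$, $\pi^*_r(a|s):=\pi_{\mathrm{ref}}(a|s)e^{r(s,a)/\beta}/\sum_{a'}\pi_{\mathrm{ref}}(a'|s)e^{r(s,a')/\beta}$. The regularized value is $J_\beta(\pi):=\mathbb{E}_{s\sim\rho}\big[\mathbb{E}_{a\sim\pi(\cdot|s)}[r^*(s,a)]-\beta\,\mathrm{KL}(\pi(\cdot|s)\|\pi_{\mathrm{ref}}(\cdot|s))\big]$. The coverage coefficient is $\mathrm{Cov}^{\tilde\pi|\pi}:=\mathbb{E}_{s\sim\rho,a\sim\tilde\pi(\cdot|s)}\big[\tilde\pi(a|s)/\pi(a|s)\big]$. $\mathrm{conv}(\Pi)$ is the set of all finite convex combinations $\sum_i\lambda_i\pi^i$ ($\lambda_i\ge0$, $\sum_i\lambda_i=1$, $\pi^i\in\Pi$), taken pointwise in $(a|s)$. *)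

From Stdlib Require List.
From HB Require Import structures.
From mathcomp Require Import all_boot all_order all_algebra.
From mathcomp Require Import all_classical all_reals all_analysis.
Set Implicit Arguments. Unset Strict Implicit. Unset Printing Implicit Defensive.
Import Order.TTheory GRing.Theory Num.Theory.
Local Open Scope ring_scope.

Section Defs.
Context {R : realType} {d : measure_display} {S : measurableType d} {A : finType}.

Definition is_policy (pi : S -> A -> R) : Prop :=
  forall s, (forall a, 0 <= pi s a) /\ \sum_(a : A) pi s a = 1.

Definition pistar (piref : S -> A -> R) (beta : R) (r : S -> A -> R) : S -> A -> R :=
  fun s a => piref s a * expR (r s a / beta) /
             \sum_(a' : A) piref s a' * expR (r s a' / beta).

Definition KL (p q : S -> A -> R) (s : S) : R :=
  \sum_(a : A) p s a * ln (p s a / q s a).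

Definition Jbeta (rho : probability S R) (rstar piref : S -> A -> R) (beta : R)
  (pi : S -> A -> R) : \bar R :=
  (\int[rho]_s (\sum_(a : A) pi s a * rstar s a - beta * KL pi piref s)%:E)%E.

Definition Cov (rho : probability S R) (pit pi : S -> A -> R) : \bar R :=
  (\int[rho]_s (\sum_(a : A) pit s a * (pit s a / pi s a))%:E)%E.

Definition conv_pol (Pi : seq (S -> A -> R)) (pi : S -> A -> R) : Prop :=
  exists (n : nat) (lam : 'I_n -> R) (p : 'I_n -> S -> A -> R),
    [/\ forall i, 0 <= lam i,
        \sum_(i < n) lam i = 1,
        forall i, List.In (p i) Pi
      & pi = fun s a => \sum_(i < n) lam i * p i s a].

End Defs.

Definition kappa {R : realType} (x : R) : R := (x - 1) ^+ 2 / (x - 1 - ln x).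

(* Write t = pistar(a|s) / pi(a|s). The Gibbs variational identity
   J_beta(pi) = E_rho[beta ln Z(s) - beta KL(pi(.|s) || pistar(.|s))] gives
   J_beta(pistar) - J_beta(pi) = beta E_rho E_{a~pi}[t - 1 - ln t], while
   Cov = 1 + E_rho E_{a~pi}[(t - 1)^2] since both policies are normalized.
   Every policy of conv(Pi), every pistar_{r^w} and pistar_{r*} itself stays within a
   factor e^{+-R/beta} of pi_ref, so t <= x := e^{2R/beta}. It remains to show
   (t - 1)^2 <= kappa(x) (t - 1 - ln t) for 0 < t <= x: the ratio
   (t - 1)^2 / (t - 1 - ln t) is at most 2 on (0, 1), at least 2 on (1, +oo) and
   nondecreasing there, and kappa(x) is its value at x. *)

From Stdlib Require List.
From HB Require Import structures.
From mathcomp Require Import all_boot all_order all_algebra.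
From mathcomp Require Import all_classical all_reals all_analysis.
From mathcomp Require Import ring lra measurable_realfun.
Import Order.TTheory GRing.Theory Num.Theory.
Local Open Scope ring_scope.

Section ln_inequalities.
Context {R : realType}.
Implicit Types t x : R.

Lemma ln_le_subr1 t : 0 < t -> ln t <= t - 1.
Proof. by move=> t0; have := @le_ln1Dx R (t - 1); rewrite subrKC; apply; lra. Qed.

Lemma is_derive_ge0_le (f df : R -> R) (a b : R) : a <= b ->
  (forall x, a <= x <= b -> is_derive x 1 f (df x)) ->
  (forall x, a < x < b -> 0 <= df x) -> f a <= f b.
Proof.
move=> ab fdf df0.
have fab x : x \in `[a, b] -> is_derive x 1 f (df x).
  by rewrite in_itv /= => /fdf.
apply: (@ger0_derive1_le_cc R f a b) => //.
- by move=> x; rewrite in_itv /= => /andP[ax xb]; apply/ex_derive/fab; rewrite in_itv /= !ltW.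
- move=> x; rewrite in_itv /= => /andP[ax xb].
  have /fab fx : x \in `[a, b] by rewrite in_itv /= !ltW.
  by rewrite derive1E derive_val; apply: df0; rewrite ax.
- by apply: derivable_within_continuous => x /fab fx; exact: ex_derive.
- by rewrite in_itv /= lexx ab.
- by rewrite in_itv /= lexx ab.
Qed.

Let sqr_subr1_sub_ln_gap_le (a b : R) : 0 < a -> a <= b ->
  (a - 1) ^+ 2 - 2 * (a - 1 - ln a) <= (b - 1) ^+ 2 - 2 * (b - 1 - ln b).
Proof.
move=> a0 ab.
apply: (@is_derive_ge0_le (fun t => (t - 1) ^+ 2 - 2 * (t - 1 - ln t))
  (fun t => 2 * (t - 1) ^+ 2 / t) a b ab).
- move=> t /andP[ta _]; have t0 : 0 < t by exact: lt_le_trans ta.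
  (* [dln] is used by instance resolution for the derivative of [ln]. *)
  have dln := is_derive1_ln t0; apply: is_derive_eq.
  by rewrite /GRing.scale /=; field; rewrite gt_eqF.
- move=> t /andP[ta _].
  by rewrite divr_ge0 ?(mulr_ge0 _ (sqr_ge0 _)) // ltW // (lt_trans a0).
Qed.

Lemma sqr_subr1_le_ln_gap t : 0 < t <= 1 -> (t - 1) ^+ 2 <= 2 * (t - 1 - ln t).
Proof.
case/andP=> t0 t1; rewrite -subr_le0.
by have := sqr_subr1_sub_ln_gap_le _ _ t0 t1; rewrite ln1; lra.
Qed.

Lemma ln_gap_le_sqr_subr1 t : 1 <= t -> 2 * (t - 1 - ln t) <= (t - 1) ^+ 2.
Proof.
move=> t1; rewrite -subr_ge0.
by have := sqr_subr1_sub_ln_gap_le _ _ ltr01 t1; rewrite ln1; lra.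
Qed.

Lemma sqr_subr1_le_mul_ln_gap t : 1 <= t -> (t - 1) ^+ 2 <= 2 * t * (t - 1 - ln t).
Proof.
move=> t1; rewrite -subr_ge0.
have -> : 0 = 2 * 1 * (1 - 1 - ln 1) - (1 - 1) ^+ 2 :> R by rewrite ln1; ring.
apply: (@is_derive_ge0_le (fun t => 2 * t * (t - 1 - ln t) - (t - 1) ^+ 2)
  (fun t => 2 * (t - 1 - ln t)) 1 t t1).
- move=> x /andP[x1 _]; have x0 : 0 < x by exact: lt_le_trans x1.
  have dln := is_derive1_ln x0; apply: is_derive_eq.
  by rewrite /GRing.scale /=; field; rewrite gt_eqF.
- move=> x /andP[x1 _].
  by rewrite mulr_ge0 // subr_ge0 ln_le_subr1 // (lt_trans ltr01).
Qed.

Lemma ln_gap_gt0 x : 1 < x -> 0 < x - 1 - ln x.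
Proof.
move=> x1; have := sqr_subr1_le_mul_ln_gap x (ltW x1).
have : 0 < (x - 1) ^+ 2 by rewrite exprn_gt0 // subr_gt0.
nra.
Qed.

Lemma ln_gap_ratio_le t x : 1 < t <= x ->
  (t - 1) ^+ 2 * (x - 1 - ln x) <= (x - 1) ^+ 2 * (t - 1 - ln t).
Proof.
case/andP=> t1 tx.
pose F y := (y - 1) ^+ 2 * (t - 1 - ln t) - (t - 1) ^+ 2 * (y - 1 - ln y).
suff : F t <= F x by rewrite /F subrr subr_ge0.
apply: (@is_derive_ge0_le F
  (fun y => (y - 1) / y * (2 * y * (t - 1 - ln t) - (t - 1) ^+ 2)) t x tx).
- move=> y /andP[ty _]; have y0 : 0 < y by rewrite (lt_trans ltr01) // (lt_le_trans t1).
  have dln := is_derive1_ln y0; apply: is_derive_eq.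
  by rewrite /GRing.scale /=; field; rewrite gt_eqF.
- move=> y /andP[ty _]; have y1 : 1 < y by exact: lt_trans t1 ty.
  apply: mulr_ge0; first by apply: divr_ge0; lra.
  have := sqr_subr1_le_mul_ln_gap t (ltW t1); have := ln_gap_gt0 t t1.
  rewrite subr_ge0; nra.
Qed.

Lemma norm_ln_div_le (u v m : R) : 0 < u -> 0 < v ->
  (`|ln (u / v)| <= m) = (v * expR (- m) <= u <= v * expR m).
Proof.
move=> u0 v0; rewrite ler_norml -[- m <= _]ler_expR -[_ <= m]ler_expR.
rewrite lnK ?posrE ?divr_gt0 //.
by rewrite ler_pdivlMr // ler_pdivrMr // ![_ * v]mulrC.
Qed.

Lemma kappa_ge2 x : 1 < x -> 2 <= kappa x.
Proof.
move=> x1; rewrite /kappa ler_pdivlMr ?ln_gap_gt0 //.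
exact: ln_gap_le_sqr_subr1 (ltW x1).
Qed.

Lemma sqr_subr1_le_kappa x t : 1 < x -> 0 < t <= x ->
  (t - 1) ^+ 2 <= kappa x * (t - 1 - ln t).
Proof.
move=> x1 /andP[t0 tx].
have [t1|t1] := leP t 1.
  apply: le_trans (sqr_subr1_le_ln_gap t _) _; first by rewrite t0.
  by rewrite ler_wpM2r ?kappa_ge2 // subr_ge0 ln_le_subr1.
rewrite /kappa mulrAC ler_pdivlMr ?ln_gap_gt0 //.
by apply: ln_gap_ratio_le; rewrite t1.
Qed.

End ln_inequalities.

Section state.
Context {R : realType} {d : measure_display} {S : measurableType d} {A : finType}.
Implicit Types (p q piref r : S -> A -> R) (s : S).

Definition partition piref (beta : R) r s : R := \sum_a piref s a * expR (r s a / beta).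

Definition state_value (rstar piref : S -> A -> R) (beta : R) (pi : S -> A -> R) s : R :=
  \sum_a pi s a * rstar s a - beta * KL pi piref s.

Lemma pistarE piref beta r s a :
  pistar piref beta r s a = piref s a * expR (r s a / beta) / partition piref beta r s.
Proof. by []. Qed.

Lemma pistar_gt0 piref beta r s a : 0 < piref s a -> 0 < partition piref beta r s ->
  0 < pistar piref beta r s a.
Proof. by move=> ref0 Z0; rewrite pistarE divr_gt0 // mulr_gt0 // expR_gt0. Qed.

Lemma pistar_sum1 piref beta r s : partition piref beta r s != 0 ->
  \sum_a pistar piref beta r s a = 1.
Proof. by move=> Z0; rewrite /pistar -mulr_suml divff. Qed.

Lemma KL_self p s : (forall a, 0 < p s a) -> KL p p s = 0.
Proof. by move=> p0; rewrite /KL big1 // => a _; rewrite divff ?gt_eqF // ln1 mulr0. Qed.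

Lemma sum_ratio_chi2 p q s :
  \sum_a p s a = 1 -> \sum_a q s a = 1 -> (forall a, 0 < q s a) ->
  \sum_a p s a * (p s a / q s a) = 1 + \sum_a q s a * (p s a / q s a - 1) ^+ 2.
Proof.
move=> p1 q1 q0.
have -> : \sum_a q s a * (p s a / q s a - 1) ^+ 2 =
    \sum_a (p s a * (p s a / q s a) - 2 * p s a + q s a).
  by apply: eq_bigr => a _; field; rewrite gt_eqF.
by rewrite !big_split /= sumrN -mulr_sumr p1 q1; ring.
Qed.

Lemma KL_ln_gap p q s :
  \sum_a p s a = 1 -> \sum_a q s a = 1 -> (forall a, 0 < p s a) -> (forall a, 0 < q s a) ->
  KL q p s = \sum_a q s a * (p s a / q s a - 1 - ln (p s a / q s a)).
Proof.
move=> p1 q1 p0 q0.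
have -> : \sum_a q s a * (p s a / q s a - 1 - ln (p s a / q s a)) =
    \sum_a (p s a - q s a + q s a * ln (q s a / p s a)).
  apply: eq_bigr => a _.
  rewrite -[q s a / p s a]invf_div lnV ?posrE ?divr_gt0 //.
  by field; rewrite gt_eqF.
by rewrite big_split /= sumrB p1 q1 subrr add0r.
Qed.

Lemma state_value_gibbs rstar piref q beta s :
  0 < beta -> 0 < partition piref beta rstar s ->
  (forall a, 0 < piref s a) -> (forall a, 0 < q s a) -> \sum_a q s a = 1 ->
  state_value rstar piref beta q s =
    beta * ln (partition piref beta rstar s) - beta * KL q (pistar piref beta rstar) s.
Proof.
move=> b0 Z0 ref0 q0 q1; set Z := partition piref beta rstar s.
have lnq a : ln (q s a / pistar piref beta rstar s a) =
    ln (q s a / piref s a) - rstar s a / beta + ln Z.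
  have -> : q s a / pistar piref beta rstar s a =
      q s a / piref s a * (Z / expR (rstar s a / beta)).
    by rewrite pistarE /Z; field; rewrite !gt_eqF ?expR_gt0.
  by rewrite lnM ?posrE ?divr_gt0 ?expR_gt0 // [ln (Z / _)]ln_div ?posrE ?expR_gt0 // expRK; ring.
rewrite /state_value /KL.
under [in RHS]eq_bigr do rewrite lnq.
have -> : \sum_a q s a * (ln (q s a / piref s a) - rstar s a / beta + ln Z) =
    \sum_a q s a * ln (q s a / piref s a) - (\sum_a q s a * rstar s a) / beta + ln Z.
  rewrite -[in RHS](mul1r (ln Z)) -q1 !mulr_suml -sumrB -big_split /=.
  by apply: eq_bigr => a _; ring.
by field; rewrite gt_eqF.
Qed.

Lemma state_value_pistar_sub rstar piref q beta s :
  0 < beta -> 0 < partition piref beta rstar s ->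
  (forall a, 0 < piref s a) -> (forall a, 0 < q s a) -> \sum_a q s a = 1 ->
  state_value rstar piref beta (pistar piref beta rstar) s - state_value rstar piref beta q s =
    beta * KL q (pistar piref beta rstar) s.
Proof.
move=> b0 Z0 ref0 q0 q1.
have ps0 a : 0 < pistar piref beta rstar s a by exact: pistar_gt0.
have ps1 := pistar_sum1 piref beta rstar s (lt0r_neq0 Z0).
by rewrite !state_value_gibbs // KL_self // mulr0 subr0 opprB addrC subrK.
Qed.

Lemma sum_ratio_le_kappa_KL p q s x : 1 < x ->
  \sum_a p s a = 1 -> \sum_a q s a = 1 -> (forall a, 0 < p s a) -> (forall a, 0 < q s a) ->
  (forall a, p s a / q s a <= x) ->
  \sum_a p s a * (p s a / q s a) <= 1 + kappa x * KL q p s.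
Proof.
move=> x1 p1 q1 p0 q0 px.
rewrite sum_ratio_chi2 // KL_ln_gap // lerD2l mulr_sumr.
apply: ler_sum => a _; rewrite [in leRHS]mulrCA; apply: ler_wpM2l; first exact: ltW.
by apply: sqr_subr1_le_kappa => //; rewrite px andbT divr_gt0.
Qed.

End state.

Section integral.
Context {R : realType} {d : measure_display} {S : measurableType d}.
Variable rho : probability S R.
Implicit Types (f g h : S -> R).

Lemma measurable_fun_inv_gt0 (f : S -> R) : measurable_fun setT f ->
  (forall s, 0 < f s) -> measurable_fun setT (fun s => (f s)^-1).
Proof.
move=> mf f0; rewrite (_ : (fun s => _) = (fun s => expR (- ln (f s)))); last first.
  by apply/funext => s; rewrite -lnV ?posrE // lnK // posrE invr_gt0.
apply: (measurableT_comp (@measurable_expR R)).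
apply: (measurableT_comp (@oppr_measurable R _)).
exact: (measurableT_comp (@measurable_ln R)).
Qed.

Lemma bounded_integrable f (M : R) : measurable_fun setT f ->
  (forall s, `|f s| <= M) -> rho.-integrable setT (EFin \o f).
Proof.
move=> mf fM; apply: (@le_integrable _ _ _ rho _ measurableT _ (EFin \o cst M)).
- exact/measurable_EFinP.
- by move=> s _ /=; rewrite lee_fin (le_trans (fM s)) // ler_norm.
- exact: finite_measure_integrable_cst.
Qed.

Lemma integral_le_1_add_scaleB f g h (c M : R) :
  measurable_fun setT f -> measurable_fun setT g -> measurable_fun setT h ->
  (forall s, `|g s| <= M) -> (forall s, `|h s| <= M) -> 0 <= c ->
  (forall s, 0 <= f s) -> (forall s, f s <= 1 + c * (g s - h s)) ->
  (\int[rho]_s (f s)%:E <= 1%:E + c%:E * (\int[rho]_s (g s)%:E - \int[rho]_s (h s)%:E))%E.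
Proof.
move=> mf mg mh gM hM c0 f0 fgh.
have ig := bounded_integrable g M mg gM; have ih := bounded_integrable h M mh hM.
have igh := integrableB measurableT ig ih.
have i1 := finite_measure_integrable_cst rho 1 measurableT.
have if1 : rho.-integrable setT (EFin \o f).
  apply: (bounded_integrable _ (1 + c * (M + M))) => // s.
  rewrite ger0_norm // (le_trans (fgh s)) // lerD2l ler_wpM2l //.
  by rewrite (le_trans (ler_norm _)) // (le_trans (ler_normB _ _)) // lerD.
have int1 : (\int[rho]_s (1%R)%:E = 1%:E)%E.
  by rewrite (integral_cst _ measurableT) mul1e; exact: probability_setT.
rewrite -(integralB_EFin measurableT ig ih) -(integralZl measurableT igh) -int1.
have icgh := integrableZl measurableT c igh.
rewrite -(integralD measurableT i1 icgh).
apply: le_integral => //; first exact: integrableD.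
by move=> s _; rewrite -EFinB -EFinM -EFinD lee_fin.
Qed.
End integral.

Section policies.
Context {R : realType} {d : measure_display} {S : measurableType d} {A : finType}.
Variable piref : S -> A -> R.
Hypothesis piref_gt0 : forall s a, 0 < piref s a.
Implicit Types (p q pi r : S -> A -> R) (s : S) (m : R).

Definition ref_bounded m pi : Prop :=
  [/\ forall s, \sum_a pi s a = 1,
      forall s a, piref s a * expR (- m) <= pi s a <= piref s a * expR m
    & forall a, measurable_fun setT (fun s => pi s a)].

Lemma ref_bounded_gt0 m pi s a : ref_bounded m pi -> 0 < pi s a.
Proof.
case=> _ /(_ s a) /andP[pl _] _.
by apply: lt_le_trans pl; rewrite mulr_gt0 ?expR_gt0.
Qed.

Lemma ref_bounded_norm_ln m pi s a : ref_bounded m pi -> `|ln (pi s a / piref s a)| <= m.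
Proof.
move=> pim; rewrite norm_ln_div_le ?piref_gt0 ?(ref_bounded_gt0 _ _ _ _ pim) //.
by case: pim.
Qed.

Lemma ref_bounded_ratio_le m p q s a : ref_bounded m p -> ref_bounded m q ->
  p s a / q s a <= expR (2 * m).
Proof.
move=> pm qm; have q0 := ref_bounded_gt0 _ _ s a qm.
case: pm => _ /(_ s a) /andP[_ pu] _; case: qm => _ /(_ s a) /andP[ql _] _.
rewrite ler_pdivrMr //; apply: le_trans pu _.
have -> : piref s a * expR m = expR (2 * m) * (piref s a * expR (- m)).
  by rewrite mulrCA -expRD; congr (_ * expR _); ring.
by apply: ler_wpM2l ql; rewrite ltW ?expR_gt0.
Qed.

Lemma ref_bounded_of_norm_ln m pi : is_policy pi ->
  (forall a, measurable_fun setT (fun s => pi s a)) ->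
  (forall s a, 0 < pi s a /\ `|ln (pi s a / piref s a)| <= m) -> ref_bounded m pi.
Proof.
move=> pol mpi bd; split=> // [s | s a]; first by case: (pol s).
by case: (bd s a) => pi0; rewrite norm_ln_div_le.
Qed.

Lemma ref_bounded_conv m n (lam : 'I_n -> R) (p : 'I_n -> S -> A -> R) :
  (forall i, 0 <= lam i) -> \sum_i lam i = 1 -> (forall i, ref_bounded m (p i)) ->
  ref_bounded m (fun s a => \sum_i lam i * p i s a).
Proof.
move=> lam0 lam1 pm; split.
- move=> s; rewrite exchange_big /= -[RHS]lam1; apply: eq_bigr => i _.
  by rewrite -mulr_sumr; case: (pm i) => -> _ _; rewrite mulr1.
- move=> s a; have pb i := let: And3 _ pb _ := pm i in pb s a.
  apply/andP; split.
    rewrite -[X in X <= _]mul1r -lam1 mulr_suml; apply: ler_sum => i _.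
    by apply: ler_wpM2l => //; case/andP: (pb i).
  rewrite -[X in _ <= X]mul1r -lam1 mulr_suml; apply: ler_sum => i _.
  by apply: ler_wpM2l => //; case/andP: (pb i).
- move=> a; apply: measurable_sum => i; apply: measurable_funM => //.
  by case: (pm i).
Qed.

Lemma partition_bounds beta Rmax r s : is_policy piref -> 0 < beta ->
  (forall a, 0 <= r s a <= Rmax) -> 1 <= partition piref beta r s <= expR (Rmax / beta).
Proof.
move=> pol b0 rb; have [ref0 ref1] := pol s.
apply/andP; split.
  rewrite -{1}ref1; apply: ler_sum => a _; have /andP[r0 _] := rb a.
  by rewrite -{1}[piref s a]mulr1 ler_wpM2l // -expR0 ler_expR divr_ge0 // ltW.
rewrite -[X in _ <= X]mul1r -ref1 mulr_suml; apply: ler_sum => a _.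
have /andP[_ rM] := rb a.
by rewrite ler_wpM2l // ler_expR ler_wpM2r // invr_ge0 ltW.
Qed.

Lemma measurable_partition beta r :
  (forall a, measurable_fun setT (fun s => piref s a)) ->
  (forall a, measurable_fun setT (fun s => r s a)) ->
  measurable_fun setT (partition piref beta r).
Proof.
move=> mref mr; apply: measurable_sum => a; apply: measurable_funM => //.
by apply: (measurableT_comp (@measurable_expR R)); apply: measurable_funM.
Qed.

Lemma pistar_ref_bounded beta Rmax r : is_policy piref ->
  (forall a, measurable_fun setT (fun s => piref s a)) -> 0 < beta ->
  (forall s a, 0 <= r s a <= Rmax) -> (forall a, measurable_fun setT (fun s => r s a)) ->
  ref_bounded (Rmax / beta) (pistar piref beta r).
Proof.
move=> pol mref b0 rb mr.
have Zb s := partition_bounds beta Rmax r s pol b0 (rb s).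
have Z0 s : 0 < partition piref beta r s by case/andP: (Zb s) => Z1 _; exact: lt_le_trans Z1.
split.
- by move=> s; rewrite pistar_sum1 ?gt_eqF.
- move=> s a; have /andP[Z1 ZM] := Zb s; have /andP[r0 rM] := rb s a.
  have e1 : 1 <= expR (r s a / beta) by rewrite -expR0 ler_expR divr_ge0 // ltW.
  have eM : expR (r s a / beta) <= expR (Rmax / beta).
    by rewrite ler_expR ler_wpM2r // invr_ge0 ltW.
  have em0 := expR_gt0 (Rmax / beta).
  rewrite pistarE -mulrA; apply/andP; split; apply: (ler_wpM2l (ltW (piref_gt0 s a))).
    by rewrite expRN ler_pdivlMr // mulrC ler_pdivrMr //; nra.
  by rewrite ler_pdivrMr //; nra.
- move=> a; apply: measurable_funM.
    apply: measurable_funM => //.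
    by apply: (measurableT_comp (@measurable_expR R)); apply: measurable_funM.
  exact: measurable_fun_inv_gt0 (measurable_partition beta r mref mr) Z0.
Qed.

Lemma state_value_norm_le rstar beta Rmax m pi s : 0 <= beta ->
  (forall a, 0 <= rstar s a <= Rmax) -> ref_bounded m pi ->
  `|state_value rstar piref beta pi s| <= Rmax + beta * m.
Proof.
move=> b0 rb pim; have [pi1 _ _] := pim.
have pi0 a := ref_bounded_gt0 _ _ s a pim.
have -> : Rmax + beta * m = \sum_a pi s a * Rmax + beta * \sum_a pi s a * m.
  by rewrite -!mulr_suml pi1 !mul1r.
apply: le_trans (ler_normB _ _) _; apply: lerD.
  apply: le_trans (ler_norm_sum _ _ _) _; apply: ler_sum => a _.
  have /andP[r0 rM] := rb a.
  rewrite normrM (ger0_norm r0) (ger0_norm (ltW (pi0 a))).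
  by apply: ler_wpM2l => //; exact: ltW.
rewrite normrM (ger0_norm b0); apply: ler_wpM2l => //.
apply: le_trans (ler_norm_sum _ _ _) _; apply: ler_sum => a _.
rewrite normrM (ger0_norm (ltW (pi0 a))); apply: ler_wpM2l; first exact: ltW.
exact: ref_bounded_norm_ln.
Qed.

Lemma measurable_state_value rstar beta m pi :
  (forall a, measurable_fun setT (fun s => piref s a)) ->
  (forall a, measurable_fun setT (fun s => rstar s a)) -> ref_bounded m pi ->
  measurable_fun setT (state_value rstar piref beta pi).
Proof.
move=> mref mr pim; have [_ _ mpi] := pim.
apply: measurable_funB; first by apply: measurable_sum => a; apply: measurable_funM.
apply: measurable_funM => //; apply: measurable_sum => a; apply: measurable_funM => //.
apply: (measurableT_comp (@measurable_ln R)); apply: measurable_funM => //.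
exact: measurable_fun_inv_gt0.
Qed.

Lemma sum_ratio_ge0 m p q s : ref_bounded m p -> ref_bounded m q ->
  0 <= \sum_a p s a * (p s a / q s a).
Proof.
move=> pm qm; apply: sumr_ge0 => a _.
have p0 := ref_bounded_gt0 _ _ s a pm; have q0 := ref_bounded_gt0 _ _ s a qm.
by rewrite mulr_ge0 ?divr_ge0 ?ltW.
Qed.

Lemma measurable_sum_ratio m p q : ref_bounded m p -> ref_bounded m q ->
  measurable_fun setT (fun s => \sum_a p s a * (p s a / q s a)).
Proof.
move=> pm qm; have [_ _ mp] := pm; have [_ _ mq] := qm.
apply: measurable_sum => a; apply: measurable_funM => //; apply: measurable_funM => //.
by apply: measurable_fun_inv_gt0 => // s; apply: ref_bounded_gt0 qm.
Qed.

Lemma sum_ratio_pistar_le rstar beta m q s : 0 < beta -> 0 < m ->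
  0 < partition piref beta rstar s ->
  ref_bounded m (pistar piref beta rstar) -> ref_bounded m q ->
  \sum_a pistar piref beta rstar s a * (pistar piref beta rstar s a / q s a) <=
    1 + kappa (expR (2 * m)) / beta * (state_value rstar piref beta (pistar piref beta rstar) s
                                       - state_value rstar piref beta q s).
Proof.
move=> b0 m0 Z0 psm qm; have [ps1 _ _] := psm; have [q1 _ _] := qm.
have q0 a := ref_bounded_gt0 _ _ s a qm.
rewrite state_value_pistar_sub // mulrA divfK ?gt_eqF //.
apply: sum_ratio_le_kappa_KL => // [|a|a].
- by rewrite expR_gt1 mulr_gt0.
- exact: ref_bounded_gt0 psm.
- exact: ref_bounded_ratio_le.
Qed.

End policies.


Theorem lemma3p1 (R : realType) (d : measure_display) (S : measurableType d)
  (A : finType) (rho : probability S R) (piref : S -> A -> R)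
  (beta Rmax : R) (rstar : S -> A -> R) (Pi : seq (S -> A -> R))
  (W : nat) (rw : 'I_W -> S -> A -> R) :
  is_policy piref ->
  (forall s a, 0 < piref s a) ->
  (forall a, measurable_fun setT (fun s => piref s a)) ->
  0 < beta -> 0 < Rmax ->
  (forall s a, 0 <= rstar s a <= Rmax) ->
  (forall a, measurable_fun setT (fun s => rstar s a)) ->
  (forall pi, List.In pi Pi -> is_policy pi) ->
  (forall pi, List.In pi Pi -> forall a, measurable_fun setT (fun s => pi s a)) ->
  List.In (pistar piref beta rstar) Pi ->
  (forall pi, List.In pi Pi -> forall s a,
      0 < pi s a /\ `|ln (pi s a / piref s a)| <= Rmax / beta) ->
  (forall w s a, 0 <= rw w s a <= Rmax) ->
  (forall w a, measurable_fun setT (fun s => rw w s a)) ->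
  forall pi : S -> A -> R,
    (conv_pol Pi pi \/ exists w, pi = pistar piref beta (rw w)) ->
    (Cov rho (pistar piref beta rstar) pi <=
      1%:E + (kappa (expR (2 * Rmax / beta)) / beta)%:E *
        (Jbeta rho rstar piref beta (pistar piref beta rstar)
         - Jbeta rho rstar piref beta pi))%E.
Proof.
move=> ref_pol ref_gt0 ref_meas beta_gt0 Rmax_gt0 rstar_bd rstar_meas
  Pi_pol Pi_meas _ Pi_bd rw_bd rw_meas pi pi_in.
have m_gt0 : 0 < Rmax / beta by rewrite divr_gt0.
have star_bd : ref_bounded piref (Rmax / beta) (pistar piref beta rstar).
  exact: pistar_ref_bounded.
have pi_bd : ref_bounded piref (Rmax / beta) pi.
  case: pi_in => [[n [lam [p [lam_ge0 lam_sum1 p_in ->]]]] | [w ->]].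
    apply: ref_bounded_conv => // i; have p_i := p_in i.
    by apply: ref_bounded_of_norm_ln => //; [exact: Pi_pol | exact: Pi_meas | exact: Pi_bd].
  exact: pistar_ref_bounded.
(* Cov and Jbeta unfold to the rho-integrals of the two sides of sum_ratio_pistar_le. *)
apply: (integral_le_1_add_scaleB _ _ (state_value rstar piref beta (pistar piref beta rstar))
  (state_value rstar piref beta pi) _ (Rmax + beta * (Rmax / beta))).
- exact: measurable_sum_ratio star_bd pi_bd.
- exact: measurable_state_value star_bd.
- exact: measurable_state_value pi_bd.
- by move=> s; apply: state_value_norm_le; rewrite ?ltW.
- by move=> s; apply: state_value_norm_le; rewrite ?ltW.
- apply: divr_ge0 (ltW beta_gt0); apply: le_trans (kappa_ge2 _ _) => //.
  by rewrite expR_gt1 -mulrA mulr_gt0.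
- by move=> s; apply: sum_ratio_ge0 star_bd pi_bd.
- move=> s; rewrite -[2 * Rmax / beta]mulrA; apply: sum_ratio_pistar_le => //.
  have /andP[Z1 _] := partition_bounds piref beta Rmax rstar s ref_pol beta_gt0 (rstar_bd s).
  exact: lt_le_trans Z1.
Qed.
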